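(* For all nonnegative integers $n$ and $r$ with $n\geqslant\lceil r/2\rceil+1$, $$m\!\left(K_n^2, r\right)=\left\lfloor\frac{(r+1)^2}{4}\right\rfloor.$$
   Context: All graphs are finite, simple and undirected. For a nonnegative integer $r$ and a graph $G$, the $r$-neighbor bootstrap percolation process on $G$ starts with a set $A_0\subseteq V(G)$ of initially active vertices, and for $i\geqslant 1$, $A_i=A_{i-1}\cup\{v\in V(G) : |N(v)\cap A_{i-1}|\geqslant r\}$, where $N(v)$ is the set of neighbors of $v$. The set $A_0$ is a percolating set if $\bigcup_{i\geqslant 0}A_i=V(G)$. $m(G,r)$ denotes the minimum size of a percolating set of $G$ in the $r$-neighbor bootstrap percolation process. $K_n^2=K_n\square K_n$ is the graph with vertex set $\{0,\ldots,n-1\}^2$ in which two vertices are adjacent iff they differ in exactly one coordinate. *)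

From mathcomp Require Import all_boot.
Set Implicit Arguments. Unset Strict Implicit. Unset Printing Implicit Defensive.

Section Bootstrap.
Variables (T : finType) (e : rel T) (r : nat).

Definition nbhd (v : T) : {set T} := [set u | e v u].

Definition bp_step (A : {set T}) : {set T} :=
  A :|: [set v | r <= #|nbhd v :&: A|].

Definition bp_iter (i : nat) (A0 : {set T}) : {set T} := iter i bp_step A0.

Definition percolating (A0 : {set T}) : Prop :=
  forall v : T, exists i, v \in bp_iter i A0.

Definition is_m_perc (k : nat) : Prop :=
  (exists A0 : {set T}, percolating A0 /\ #|A0| = k) /\
  (forall A0 : {set T}, percolating A0 -> k <= #|A0|).
End Bootstrap.

(* K_n^2 = K_n □ K_n on {0..n-1}^2: adjacent iff they differ in exactly one coordinate *)
Definition rook_adj (n : nat) : rel ('I_n * 'I_n) :=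
  fun x y => ((x.1 != y.1) && (x.2 == y.2)) || ((x.1 == y.1) && (x.2 != y.2)).
Arguments rook_adj : clear implicits.

From mathcomp Require Import all_boot zify.
Set Implicit Arguments. Unset Strict Implicit. Unset Printing Implicit Defensive.

(* Write a = ceil(r/2), b = floor(r/2) and f(r) = floor((r+1)^2/4) = C(a+1,2) + C(b+1,2).
   Upper bound: the corner triangles i + j < a and (n-1-i) + (n-1-j) < b percolate.
   Activating the remaining cells by increasing i + (n-1-j), the cell (i, j) already
   sees at least a - i + (n-1-j) active cells in its row and i + (j+b+1-n) in its column,
   that is a + b = r.
   Lower bound, by induction on r over subgrids R x C with |R|, |C| > a: if A spans
   the grid and is closed (every cell outside A has fewer than r neighbours in A),
   then A is the whole grid, of size at least (a+1)^2. Otherwise some cell outside A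
   has r neighbours in A, all on its row and column; removing that row and column
   costs every other cell at most two neighbours, so what is left of A spans the
   smaller grid for threshold r - 2, and |A| >= f(r-2) + r = f(r). *)

Lemma card_ord_lt_or_ge n c d :
  c <= d -> #|[set x : 'I_n | (x < c) || (d <= x)]| = minn c n + (n - d).
Proof.
move=> le_cd; rewrite -sum1dep_card big_mkcond /=.
elim: n => [|n IHn]; first by rewrite big_ord0.
by rewrite big_ord_recr /= IHn; case: ifP; lia.
Qed.

Lemma card_set_pair (T1 T2 : finType) (S : {set T1 * T2}) :
  #|S| = \sum_(x : T1) #|[set y | (x, y) \in S]|.
Proof.
rewrite -sum1_card.
transitivity (\sum_(x : T1) \sum_(y | (x, y) \in S) 1).
  by rewrite pair_big_dep; apply: eq_bigl => -[].
by apply: eq_bigr => x _; rewrite sum1dep_card.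
Qed.

Lemma sum_ord_subn n a : a <= n -> \sum_(i < n) (a - i) = 'C(a.+1, 2).
Proof.
have sum_ord_subn_diag m : \sum_(i < m) (m - i) = 'C(m.+1, 2).
  elim: m => [|m IHm]; first by rewrite big_ord0.
  by rewrite big_ord_recl subn0 (binS m.+1) bin1 -IHm addnC.
move=> le_an; rewrite -sum_ord_subn_diag (big_ord_widen _ (fun i => a - i) le_an).
rewrite [RHS]big_mkcond; apply: eq_bigr => i _.
by case: ltnP => // le_ai; apply/eqP; rewrite subn_eq0.
Qed.

Lemma sqr_succ_div4_rec r : (r.+3 ^ 2) %/ 4 = (r.+1 ^ 2) %/ 4 + r.+2.
Proof. rewrite -!mulnn; lia. Qed.

Lemma sqr_succ_div4E r : (r.+1 ^ 2) %/ 4 = 'C((uphalf r).+1, 2) + 'C(r./2.+1, 2).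
Proof.
elim/ltn_ind: r => -[|[|r]] IHr //.
rewrite sqr_succ_div4_rec IHr // /= !(binS _.+1) !bin1.
have := odd_double_half r; rewrite uphalf_half; lia.
Qed.

Lemma sqr_succ_div4_le r : (r.+1 ^ 2) %/ 4 <= (uphalf r).+1 * (uphalf r).+1.
Proof. rewrite uphalf_half; have := odd_double_half r; case: (odd r) => /=; nia. Qed.

Section Closure.
Variables (T : finType) (e : rel T) (r : nat).

Lemma sub_bp_iter i (A : {set T}) : A \subset bp_iter e r i A.
Proof.
elim: i => [|i IHi]; first exact: subxx.
exact: subset_trans IHi (subsetUl _ _).
Qed.

Lemma percolating_of_rank (A : {set T}) (rank : T -> nat) :
  (forall v, v \notin A ->
     r <= #|nbhd e v :&: (A :|: [set u | rank u < rank v])|) ->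
  percolating e r A.
Proof.
move=> rankA.
suff iterP N v : rank v < N -> v \in bp_iter e r N A.
  by move=> v; exists (rank v).+1; apply: iterP.
elim: N v => [//|N IHN] v lt_vN.
have [vA | vNA] := boolP (v \in A); first exact: subsetP (sub_bp_iter _ _) _ vA.
rewrite /bp_iter iterS /bp_step !inE; apply/orP; right.
apply: leq_trans (rankA v vNA) (subset_leq_card (setIS _ _)).
rewrite subUset sub_bp_iter; apply/subsetP => u; rewrite inE => lt_uv.
by apply: IHN; rewrite (leq_trans lt_uv).
Qed.

Definition closed_in (G S : {set T}) : bool :=
  [forall v in G :\: S, #|nbhd e v :&: S| < r].

Definition spans (G A : {set T}) : Prop :=
  forall S : {set T}, A \subset S -> S \subset G -> closed_in G S -> G \subset S.

Lemma percolating_spans (A : {set T}) : percolating e r A -> spans setT A.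
Proof.
move=> percA S AS _ /forall_inP closedS; apply/subsetP => v _.
have [i] := percA v; apply/subsetP; elim: i => [//|i IHi].
rewrite /bp_iter iterS /bp_step; apply/subsetP => u; rewrite !inE.
case/orP => [/(subsetP IHi) // | le_r]; apply/negPn/negP => uNS.
have := closedS u; rewrite !inE uNS ltnNge => /(_ isT)/negP; apply.
by rewrite (leq_trans le_r) // subset_leq_card // setIS.
Qed.

End Closure.

Section RookGraph.
Variable n : nat.
Local Notation cell := ('I_n * 'I_n)%type.
Local Notation N := (nbhd (rook_adj n)).

Lemma rook_adj_line (u v : cell) : rook_adj n u v -> (u.1 == v.1) || (u.2 == v.2).
Proof. by case/orP => /andP[] => [_ -> | -> _]; rewrite ?orbT. Qed.

Lemma rook_nbhd_card_ge (X : {set cell}) (i j : 'I_n) (Y Z : {set 'I_n}) :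
  j \notin Y -> i \notin Z ->
  (forall y, y \in Y -> (i, y) \in X) -> (forall x, x \in Z -> (x, j) \in X) ->
  #|Y| + #|Z| <= #|N (i, j) :&: X|.
Proof.
move=> jNY iNZ XY XZ.
have inj_row : injective (fun y => (i, y) : cell) by move=> y y' [].
have inj_col : injective (fun x => (x, j) : cell) by move=> x x' [].
rewrite -(card_imset Y inj_row) -(card_imset Z inj_col) -cardsUI.
have -> : [set (i, y) | y in Y] :&: [set (x, j) | x in Z] = set0.
  apply/setP => u; rewrite !inE; apply/negP.
  by case/andP => /imsetP[y yY ->] /imsetP[x _ [_ eq_yj]]; rewrite -eq_yj yY in jNY.
rewrite cards0 addn0 subset_leq_card //; apply/subsetP => u.
rewrite !inE /rook_adj /= => /orP[] /imsetP[w wW ->] /=; rewrite eqxx /=.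
- by rewrite XY // andbT; apply: contraNneq jNY => ->.
- by rewrite XZ // andbT andbF orbF andbT; apply: contraNneq iNZ => ->.
Qed.

Lemma spans_remove_line r (R C : {set 'I_n}) (A : {set cell}) (i0 j0 : 'I_n) :
  A \subset setX R C -> spans (rook_adj n) r.+2 (setX R C) A ->
  spans (rook_adj n) r (setX (R :\ i0) (C :\ j0)) (A :&: setX (R :\ i0) (C :\ j0)).
Proof.
set G := setX R C; set G' := setX _ _ => AG spanA S AS SG' /forall_inP closedS.
have G'G : G' \subset G by apply: setXS; apply: subD1set.
have lines_nbhd w : w \in G' -> #|N w :&: (G :\: G')| <= 2.
  case: w => wi wj; rewrite !inE /= => /andP[/andP[wi_i0 _] /andP[wj_j0 _]].
  suff sub : N (wi, wj) :&: (G :\: G') \subset [set (i0, wj); (wi, j0)].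
    by rewrite (leq_trans (subset_leq_card sub)) // cards2 ltnS leq_b1.
  apply/subsetP => -[x y]; rewrite !inE /= !xpair_eqE.
  case/and3P => /rook_adj_line /= /orP[] /eqP <-.
  - move=> + /andP[wiR yC]; rewrite wi_i0 wiR yC eqxx /= andbT.
    by move=> /negbNE ->; rewrite orbT.
  - move=> + /andP[xR wjC]; rewrite wj_j0 xR wjC eqxx /= !andbT.
    by move=> /negbNE ->.
have closedS' : closed_in (rook_adj n) r.+2 G (S :|: G :\: G').
  apply/forall_inP => w /setDP[wG].
  rewrite in_setU in_setD wG andbT negb_or negbK => /andP[wNS wG'].
  rewrite setIUr (leq_ltn_trans (leq_card_setU _ _)) //.
  rewrite -addn2 -addSn leq_add ?lines_nbhd //.
  by apply: closedS; rewrite in_setD wNS wG'.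
have GS' : G \subset S :|: G :\: G'.
  apply: (spanA _ _ _ closedS'); last by rewrite subUset subsetDl (subset_trans SG').
  apply/subsetP => u uA; rewrite in_setU in_setD (subsetP AG) // andbT.
  have [uG' | uNG'] := boolP (u \in G'); last by apply/orP; right.
  by rewrite (subsetP AS) // in_setI uA.
apply/subsetP => u uG'; have := subsetP GS' u (subsetP G'G u uG').
by rewrite in_setU in_setD uG' orbF.
Qed.

Lemma rook_spans_card_ge r (R C : {set 'I_n}) (A : {set cell}) :
  uphalf r < #|R| -> uphalf r < #|C| -> A \subset setX R C ->
  spans (rook_adj n) r (setX R C) A -> (r.+1 ^ 2) %/ 4 <= #|A|.
Proof.
elim/ltn_ind: r R C A => r IHr R C A ltR ltC AG spanA.
have [closedA | /forall_inPn[[i0 j0] vGA]] := boolP (closed_in (rook_adj n) r (setX R C) A).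
  have -> : A = setX R C by apply/eqP; rewrite eqEsubset AG spanA.
  by rewrite cardsX (leq_trans (sqr_succ_div4_le r)) // leq_mul.
rewrite -leqNgt => le_r; move: vGA; rewrite in_setD in_setX => /andP[_ /andP[i0R j0C]].
set G' := setX (R :\ i0) (C :\ j0).
have nbhd_lines : N (i0, j0) :&: A \subset A :\: G'.
  apply/subsetP => -[x y]; rewrite !inE => /andP[/rook_adj_line/= /orP[] /eqP <- ->];
  by rewrite eqxx /= ?andbF.
case: r IHr ltR ltC spanA le_r => [|[|r]] IHr ltR ltC spanA le_r //.
  by rewrite (leq_trans le_r) // subset_leq_card // subsetIr.
rewrite sqr_succ_div4_rec -(cardsID G' A) leq_add //; last first.
  exact: leq_trans le_r (subset_leq_card nbhd_lines).
rewrite (cardsD1 i0 R) (cardsD1 j0 C) i0R j0C !add1n !ltnS in ltR ltC.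
by apply: (IHr r _ (R :\ i0) (C :\ j0)); rewrite ?subsetIr //; apply: spans_remove_line.
Qed.

Definition rook_corners r : {set cell} :=
  [set v : cell | (v.1 + v.2 < uphalf r) || (rev_ord v.1 + rev_ord v.2 < r./2)].

Lemma card_rook_corners r :
  uphalf r < n -> #|rook_corners r| = 'C((uphalf r).+1, 2) + 'C(r./2.+1, 2).
Proof.
move=> lt_n; have le_ba : r./2 <= uphalf r by rewrite uphalf_half leq_addl.
rewrite card_set_pair (eq_bigr (fun i : 'I_n => (uphalf r - i) + (r./2 - rev_ord i))).
  rewrite big_split [X in _ + X = _](reindex_inj rev_ord_inj).
  under [X in _ + X = _]eq_bigr => i _ do rewrite rev_ordK.
  by rewrite !sum_ord_subn // ltnW // (leq_ltn_trans le_ba).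
move=> i _; have lt_in := ltn_ord i.
rewrite (eq_card (B := [set j : 'I_n | (j < uphalf r - i) || (2 * n - i - r./2 - 1 <= j)])).
  by rewrite card_ord_lt_or_ge /=; lia.
by move=> j; rewrite !inE /=; have := ltn_ord j; lia.
Qed.

Lemma rook_corners_percolating r : uphalf r < n -> percolating (rook_adj n) r (rook_corners r).
Proof.
move=> lt_n; apply: (percolating_of_rank (rank := fun v : cell => v.1 + rev_ord v.2)).
case=> i j; rewrite inE /= negb_or -!leqNgt => /andP[le_a le_b].
have lt_in := ltn_ord i; have lt_jn := ltn_ord j.
have halves := odd_double_half r; rewrite uphalf_half in lt_n le_a *.
set Y := [set y : 'I_n | (y < odd r + r./2 - i) || (j < y)].
set Z := [set x : 'I_n | (x < i) || (2 * n - j - r./2 - 1 <= x)].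
apply: leq_trans (rook_nbhd_card_ge (Y := Y) (Z := Z) _ _ _ _).
- rewrite !card_ord_lt_or_ge; lia.
- rewrite inE negb_or -!leqNgt; lia.
- rewrite inE negb_or -!leqNgt; lia.
- move=> y; rewrite !inE /=; have := ltn_ord y; lia.
- move=> x; rewrite !inE /=; have := ltn_ord x; lia.
Qed.

End RookGraph.

Theorem theorem2p1 (n r : nat) :
  (uphalf r).+1 <= n ->
  is_m_perc (rook_adj n) r ((r.+1 ^ 2) %/ 4).
Proof.
move=> lt_n; split.
  exists (rook_corners n r); split; first exact: rook_corners_percolating.
  by rewrite card_rook_corners // sqr_succ_div4E.
move=> A percA.
have setXTT : setX [set: 'I_n] [set: 'I_n] = setT by apply/setP => -[x y]; rewrite !inE.
apply: (@rook_spans_card_ge n r setT setT); rewrite ?cardsT ?card_ord ?setXTT ?subsetT //.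
exact: percolating_spans.
Qed.
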